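(* For $r\ge2$ and odd $s\ge3$: $\operatorname{zir}(H(r,s))=2$, $\operatorname{Z}(H(r,s))=r$, and $\operatorname{ZIR}(H(r,s))=r+\frac{s-1}{2}$. For $r\ge2$ and odd $s\ge5$, $\overline{\operatorname{Z}}(H(r,s))=r+1$. For $r\ge2$, $\overline{\operatorname{Z}}(H(r,3))=r$.
   Context: $H(r,s)$ is built as follows: take $K_{2,r}$ with smaller part $\{u,u'\}$ and larger part $\{w_1,\dots,w_r\}$, and the path $P_s$ with vertices $y_1,\dots,y_s$ in path order; identify $u'$ with $y_s$. It has order $r+s+1$. Zero forcing: a blue vertex $u$ changes a white vertex $w$ to blue if $w$ is the only white neighbor of $u$; $B$ is a zero forcing set if from blue set $B$ eventually all vertices are blue; $\operatorname{Z}(G)$ is the minimum size of a zero forcing set and $\overline{\operatorname{Z}}(G)$ the maximum size of an inclusion-minimal zero forcing set. A nonempty $F\subseteq V(G)$ is a fort if every $v\notin F$ has $|N(v)\cap F|\ne1$. A private fort of $x\in S$ relative to $S$ is a fort $F$ with $S\cap F=\{x\}$; $S$ is a ZIr-set if every element of $S$ has a private fort. $\operatorname{zir}(G)$ / $\operatorname{ZIR}(G)$ are the minimum / maximum cardinality of an inclusion-maximal ZIr-set. *)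

From mathcomp Require Import all_boot.
Set Implicit Arguments. Unset Strict Implicit. Unset Printing Implicit Defensive.

Section Graph.
Variables (T : finType) (e : rel T).

Definition nbhd (v : T) : {set T} := [set w | e v w].

(** One round of zero forcing: every blue vertex v with exactly one white
    neighbour w turns w blue. (Forcing is monotone, so performing all
    available forces simultaneously yields the same final colouring.) *)
Definition zf_step (B : {set T}) : {set T} :=
  B :|: [set w | [exists v in B, nbhd v :\: B == [set w]]].

Definition zf_closure (B : {set T}) : {set T} := iter #|T| zf_step B.

Definition zero_forcing_set (B : {set T}) : bool := zf_closure B == setT.

Definition Zf : nat :=
  \big[minn/#|T|]_(B : {set T} | zero_forcing_set B) #|B|.

Definition Zbar : nat :=
  \max_(B : {set T} | minset zero_forcing_set B) #|B|.

Definition fort (F : {set T}) : bool :=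
  (F != set0) && [forall v, (v \notin F) ==> (#|nbhd v :&: F| != 1)].

Definition private_fort (S : {set T}) (x : T) (F : {set T}) : bool :=
  fort F && (S :&: F == [set x]).

Definition ZIr_set (S : {set T}) : bool :=
  [forall x in S, exists F : {set T}, private_fort S x F].

Definition zir : nat :=
  \big[minn/#|T|]_(S : {set T} | maxset ZIr_set S) #|S|.

Definition ZIR : nat :=
  \max_(S : {set T} | maxset ZIr_set S) #|S|.

End Graph.

(** The graph H(r,s) on vertex set {0,...,r+s}:
    0 = u, 1..r = w_1..w_r, r+j = y_j (1 <= j <= s), and u' = y_s = r+s.
    Edges: u w_i, u' w_i (all i), y_j y_(j+1) (1 <= j < s). *)
Definition H_adj_nat (r s x y : nat) : bool :=
  let isw i := (1 <= i <= r) in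
  let isy i := (r + 1 <= i <= r + s) in
  [|| (x == 0) && isw y, (y == 0) && isw x,
      (x == r + s) && isw y, (y == r + s) && isw x,
      [&& isy x, isy y & y == x.+1] | [&& isy x, isy y & x == y.+1] ].

Definition H_adj (r s : nat) : rel 'I_(r + s + 1) :=
  fun x y => H_adj_nat r s x y.
Arguments H_adj : clear implicits.

From mathcomp Require Import all_boot zify.
Set Implicit Arguments. Unset Strict Implicit. Unset Printing Implicit Defensive.

(* A set is zero forcing iff it meets every fort, so everything is decided by
   which vertex sets can avoid a fort of H(r,s).  Forts propagate along the
   path: once two consecutive path vertices (or the leaf y_1) lie outside a
   fort, the whole path does, and then u, u' and the w_i force the remaining
   vertices out.  Hence no fort avoids W minus one w_i together with u, u',
   y_1 or a consecutive pair y_j y_(j+1), so these sets are zero forcing;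
   conversely every zero forcing set contains W minus one w_i, since each
   {w_i, w_j} is a fort.  The fort {u} U {y_j | j odd} forces one more vertex,
   so Z = r.  A ZIr-set meets {u} U W in at most r vertices, and its private
   forts show that on the path it holds a consecutive pair (and then at most
   r - 1 vertices of {u} U W), or only y_1, or no two consecutive vertices of
   y_2 .. y_s; W U {y_2, y_4, ..., y_(s-1)} attains ZIR = r + (s-1)/2.  Every
   vertex lies in a two-element ZIr-set while {u, y_1} is maximal, so zir = 2;
   an interior pair (2 <= j <= s-2) exists only for s >= 5, giving Zbar. *)

Section Forts.
Variables (T : finType) (e : rel T).
Implicit Types (v w x : T) (A B F S : {set T}).

Lemma fort_neq0 F : fort e F -> F != set0.
Proof. by case/andP. Qed.

Lemma fortI F : F != set0 ->
  (forall v, v \notin F -> (forall x, e v x -> x \notin F) \/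
     exists a b, [/\ a \in F, b \in F, a != b, e v a & e v b]) ->
  fort e F.
Proof.
move=> F0 Fnbr; rewrite /fort F0; apply/forallP=> v; apply/implyP=> vF.
case: (Fnbr v vF) => [none | [a [b [aF bF ab va vb]]]].
  suff ->: nbhd e v :&: F = set0 by rewrite cards0.
  by apply/setP=> x; rewrite !inE; apply/negbTE/andP=> -[/none/negP].
apply/negP=> /cards1P[x vF1].
have : a \in nbhd e v :&: F by rewrite !inE va aF.
have : b \in nbhd e v :&: F by rewrite !inE vb bF.
by rewrite vF1 !inE => /eqP bx /eqP ax; rewrite ax bx eqxx in ab.
Qed.

Lemma fort_of_2dominated F F' : F != set0 -> F \subset F' ->
  (forall v, v \notin F' -> exists a b, [/\ a \in F, b \in F, a != b, e v a & e v b]) ->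
  fort e F'.
Proof.
move=> F0 sFF' dom; apply: fortI => [|v vF'].
  by apply: contraNneq F0 => F'0; rewrite -subset0 -F'0.
right; have [a [b [aF bF ab va vb]]] := dom v vF'.
by exists a, b; rewrite !(subsetP sFF').
Qed.

Lemma fort_forced_out F v w : fort e F -> v \notin F -> e v w ->
  (forall x, e v x -> x != w -> x \notin F) -> w \notin F.
Proof.
case/andP=> _ /forallP Fnbr vF vw others; apply/negP=> wF.
suff vF1 : nbhd e v :&: F = [set w] by move: (implyP (Fnbr v) vF); rewrite vF1 cards1.
apply/setP=> x; rewrite !inE; apply/andP/eqP => [[vx xF]|->] //.
by apply/eqP; apply: contraLR xF; apply: others.
Qed.

Lemma fort_disjoint_zf_step F B :
  fort e F -> F :&: B = set0 -> F :&: zf_step e B = set0.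
Proof.
move=> fF FB; have nB x : x \in F -> x \notin B.
  by move=> xF; apply/negP=> xB; have := in_set0 x; rewrite -FB inE xF xB.
apply/setP=> x; rewrite !inE; apply/negbTE/negP=> /andP[xF].
case/orP=> [|/existsP[v /andP[vB /eqP vB1]]]; first exact/negP/nB.
have vF : v \notin F by apply: contraL vB; apply: nB.
have : x \in nbhd e v :\: B by rewrite vB1 inE.
rewrite !inE => /andP[_ vx]; move: xF; apply/negP.
apply: fort_forced_out vF vx _ => // y vy yx; apply/negP=> yF.
have : y \in nbhd e v :\: B by rewrite !inE vy nB.
by rewrite vB1 inE (negbTE yx).
Qed.

Lemma subset_zf_step B : B \subset zf_step e B.
Proof. exact: subsetUl. Qed.

Lemma subset_zf_closure B : B \subset zf_closure e B.
Proof.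
rewrite /zf_closure; elim: #|T| => //= k IH.
exact: subset_trans IH (subset_zf_step _).
Qed.

(* A strict increase at each of the #|T| rounds would exceed #|T| vertices. *)
Lemma zf_step_closure B : zf_step e (zf_closure e B) = zf_closure e B.
Proof.
have fix_or_large k : zf_step e (iter k (zf_step e) B) = iter k (zf_step e) B \/
    k <= #|iter k (zf_step e) B|.
  elim: k => [|k [fix_k | le_k]] /=; first by right.
    by left; rewrite fix_k fix_k.
  have [fix_k | ne_k] := eqVneq (zf_step e (iter k (zf_step e) B)) (iter k (zf_step e) B).
    by left; rewrite fix_k fix_k.
  right; apply: leq_ltn_trans le_k (proper_card _).
  by rewrite properEneq eq_sym ne_k subset_zf_step.
case: (fix_or_large #|T|) => // full; rewrite /zf_closure.
have -> : iter #|T| (zf_step e) B = setT.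
  by apply/eqP; rewrite eqEcard subsetT cardsT full.
by apply/eqP; rewrite eqEsubset subsetT subset_zf_step.
Qed.

Lemma zero_forcing_setP B :
  reflect (forall F, fort e F -> F :&: B != set0) (zero_forcing_set e B).
Proof.
apply: (iffP eqP) => [zB F fF | meets].
  apply: contra_neq (fort_neq0 fF) => FB.
  rewrite -[F]setIT -zB /zf_closure; elim: #|T| => //= k IH.
  exact: fort_disjoint_zf_step.
apply/eqP; apply: contraT => nT.
set C := zf_closure e B in nT *.
have fC : fort e (~: C).
  apply/andP; split; first by apply: contra nT => /eqP C0; rewrite -[C]setCK C0 setC0.
  apply/forallP=> v; rewrite inE negbK.
  apply/implyP=> vC; apply/negP=> /cards1P[w vC1].
  have : w \in zf_step e C.
    rewrite /zf_step !inE; apply/orP; right; apply/existsP; exists v.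
    by rewrite vC setDE vC1 eqxx.
  rewrite /C zf_step_closure -/C => wC.
  by have := set11 w; rewrite -vC1 !inE wC andbF.
suff CB : ~: C :&: B = set0 by move: (meets _ fC); rewrite CB eqxx.
apply/setP=> x; rewrite !inE andbC.
by case: (boolP (x \in B)) => // /(subsetP (subset_zf_closure B)) ->.
Qed.

Lemma zero_forcing_meets_fort B F :
  zero_forcing_set e B -> fort e F -> exists2 x, x \in F & x \in B.
Proof. by move=> /zero_forcing_setP zB /zB /set0Pn[x /setIP[]]; exists x. Qed.

Definition private_fort_of S x F :=
  [/\ fort e F, x \in F & forall y, y \in S -> y != x -> y \notin F].

Lemma minset_zero_forcing B : zero_forcing_set e B ->
  (forall b, b \in B -> exists F, private_fort_of B b F) ->
  minset (zero_forcing_set e) B.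
Proof.
move=> zB priv; apply/minsetP; split => // B' zB' sB'B; apply/eqP.
rewrite eqEsubset sB'B; apply/subsetP=> b bB; have [F [fF bF notF]] := priv b bB.
have [x xF xB'] := zero_forcing_meets_fort zB' fF.
have [<- // | xb] := eqVneq x b.
by move: (notF x (subsetP sB'B x xB') xb); rewrite xF.
Qed.

Lemma ZIr_setP S :
  reflect (forall x, x \in S -> exists F, private_fort_of S x F) (ZIr_set e S).
Proof.
apply: (iffP forall_inP) => priv x xS; have := priv x xS.
  case/existsP=> F /andP[fF /eqP SF1]; exists F; split => // [|y yS yx].
    by have := set11 x; rewrite -SF1 => /setIP[].
  apply/negP=> yF; have : y \in S :&: F by rewrite inE yS yF.
  by rewrite SF1 inE (negbTE yx).
case=> F [fF xF notF]; apply/existsP; exists F; rewrite /private_fort fF.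
apply/eqP/setP=> y; rewrite !inE; apply/andP/eqP => [[yS yF]|->] //.
by apply/eqP; apply: contraLR yF => yx; apply: notF.
Qed.

Lemma ZIr_subset A B : ZIr_set e B -> A \subset B -> ZIr_set e A.
Proof.
move=> /ZIr_setP privB sAB; apply/ZIr_setP=> x xA.
have [F [fF xF notF]] := privB x (subsetP sAB x xA).
by exists F; split => // y yA; apply: notF (subsetP sAB y yA).
Qed.

Lemma ZIr_set2 a b Fa Fb :
  fort e Fa -> a \in Fa -> b \notin Fa -> fort e Fb -> b \in Fb -> a \notin Fb ->
  ZIr_set e [set a; b].
Proof.
move=> fa aFa bFa fb bFb aFb; apply/ZIr_setP=> x /set2P[]->.
  by exists Fa; split => // y /set2P[]->; rewrite ?eqxx.
by exists Fb; split => // y /set2P[]->; rewrite ?eqxx.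
Qed.

Lemma maxset_ZIr_card_gt1 (x0 : T) S :
  (forall x, exists2 z, z != x & ZIr_set e [set x; z]) ->
  maxset (ZIr_set e) S -> 1 < #|S|.
Proof.
move=> pairs /maxsetP[zS maxS]; rewrite ltnNge; apply/negP=> small.
have [x sSx] : exists x, S \subset [set x].
  have [-> | [x xS]] := set_0Vmem S; first by exists x0; apply: sub0set.
  by exists x; apply/subsetP=> y yS; rewrite inE (card_le1_eqP small y x).
have [z zx zxz] := pairs x.
have z_in_S : z \in S.
  rewrite -(maxS (z |: S)) ?setU11 ?subsetUr //; apply: (ZIr_subset zxz).
  by rewrite subUset sub1set !inE eqxx orbT (subset_trans sSx) // sub1set !inE eqxx.
by move: (subsetP sSx z z_in_S); rewrite inE (negbTE zx).
Qed.

End Forts.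

Lemma bigmin_eq (I : finType) (P : pred I) (f : I -> nat) N m :
  m <= N -> (exists2 i, P i & f i = m) -> (forall i, P i -> m <= f i) ->
  \big[minn/N]_(i | P i) f i = m.
Proof.
move=> mN [i0 Pi0 fi0] lb; subst m; apply/eqP; rewrite eqn_leq; apply/andP; split.
  elim: (index_enum I) (mem_index_enum i0) => [|a l IH]; first by rewrite in_nil.
  rewrite inE big_cons => /predU1P[<- | /IH le]; first by rewrite Pi0 geq_minl.
  by case: (P a) => //; apply: leq_trans (geq_minr _ _) le.
elim/big_ind: _ => [// | a b ha hb | i /lb //]; by rewrite leq_min ha hb.
Qed.

Lemma bigmax_eq (I : finType) (P : pred I) (f : I -> nat) m :
  (exists2 i, P i & f i = m) -> (forall i, P i -> f i <= m) ->
  \max_(i | P i) f i = m.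
Proof.
move=> [i0 Pi0 <-] ub; apply/eqP; rewrite eqn_leq leq_bigmax_cond // andbT.
exact/bigmax_leqP.
Qed.

Lemma card_ord_range N a b : a <= b <= N -> #|[set x : 'I_N | a <= x < b]| = b - a.
Proof.
move=> abN; rewrite cardsE cardE /enum_mem size_filter -enumT /=.
rewrite -(count_map val (fun k => a <= k < b)) val_enum_ord.
have count_iota M : count (fun k => a <= k < b) (iota 0 M) = minn b M - minn a M.
  elim: M => [|M IH]; first by rewrite !minn0.
  rewrite -addn1 iotaD count_cat IH /=; by case h1: (a <= M); case h2: (M < b); lia.
rewrite count_iota; lia.
Qed.

(* Halving the labels is injective on a set without two consecutive labels. *)
Lemma card_sparse (T : finType) (A : {set T}) (f : T -> nat) n :
  {in A &, injective f} -> (forall x, x \in A -> f x < n) ->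
  (forall x y, x \in A -> y \in A -> f y != (f x).+1) -> #|A| <= n.+1 %/ 2.
Proof.
move=> inj_f lt_n sparse; pose g x := f x %/ 2.
have inj_g : {in A &, injective g}.
  move=> x y xA yA gxy; apply: inj_f => //.
  have := sparse x y xA yA; have := sparse y x yA xA; rewrite /g in gxy; lia.
rewrite cardE -(size_map g) -(size_iota 0 (n.+1 %/ 2)).
apply: uniq_leq_size.
  by rewrite map_inj_in_uniq ?enum_uniq // => x y; rewrite !mem_enum; apply: inj_g.
move=> y /mapP[x]; rewrite mem_enum => /lt_n xn ->; rewrite mem_iota /g; lia.
Qed.

Lemma pair_spread (P : nat -> Prop) lo hi j :
  (forall k, lo <= k -> k.+2 <= hi -> P k -> P k.+1 -> P k.+2) ->
  (forall k, lo < k < hi -> P k -> P k.+1 -> P k.-1) ->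
  lo <= j < hi -> P j -> P j.+1 -> forall k, lo <= k <= hi -> P k.
Proof.
move=> up down jr Pj Pj1.
have above n : j + n < hi -> P (j + n) /\ P (j + n).+1.
  elim: n => [|n IH] lt; first by rewrite addn0.
  have /IH[P1 P2] : j + n < hi by lia.
  by rewrite addnS; split => //; apply: up => //; lia.
have below n : n <= j - lo -> P (j - n) /\ P (j - n).+1.
  elim: n => [|n IH] le; first by rewrite subn0.
  have /IH[P1 P2] : n <= j - lo by lia.
  have -> : j - n.+1 = (j - n).-1 by lia.
  have -> : (j - n).-1.+1 = j - n by lia.
  by split => //; apply: down => //; lia.
move=> k kr; have [jk | kj] := leqP j k.
  have [lt | ->] : k < hi \/ k = hi by lia.
    have /above[] : j + (k - j) < hi by lia.
    by rewrite subnKC.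
  have /above[_] : j + (hi.-1 - j) < hi by lia.
  by have -> : (j + (hi.-1 - j)).+1 = hi by lia.
have /below[] : j - k <= j - lo by lia.
by have -> : j - (j - k) = k by lia.
Qed.

(* [lia] gets very slow on the large contexts of set-membership facts below,
   so [arith] clears them first. *)
Ltac arith := repeat match goal with
  | H : is_true (?a != ?b) |- _ =>
      let T := type of a in assert_fails (unify T nat); clear H
  | H : is_true (_ \in _) |- _ => clear H
  | H : forall _, _ |- _ => clear H
  end; lia.

Section HGraph.
Variables r s : nat.
Hypotheses (r_ge2 : 2 <= r) (s_ge3 : 3 <= s) (s_odd : odd s).
Local Notation V := 'I_(r + s + 1).
Local Notation G := (H_adj r s).
Implicit Types (F B S X : {set V}).

Fact vert_default : 0 < r + s + 1. Proof. by rewrite addn1. Qed.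
(* Out-of-range [k] gives the junk vertex 0. *)
Definition vert (k : nat) : V := insubd (Ordinal vert_default) k.

Lemma val_vert k : k < r + s + 1 -> vert k = k :> nat.
Proof. by move=> lt_k; rewrite val_insubd lt_k. Qed.

Lemma vert_val (x : V) : vert x = x.
Proof. by apply: ord_inj; rewrite val_vert. Qed.

Lemma eq_vert (x : V) k : k < r + s + 1 -> (x == vert k) = (x == k :> nat).
Proof. by move=> lt_k; apply/eqP/eqP => [-> | <-]; rewrite ?val_vert ?vert_val. Qed.

Lemma vert_neq a b : a < r + s + 1 -> b < r + s + 1 -> a != b -> vert a != vert b.
Proof. by move=> lt_a lt_b; rewrite eq_vert // val_vert. Qed.

Lemma H_adjE (x y : V) : G x y = H_adj_nat r s x y. Proof. by []. Qed.

Ltac adj_arith := rewrite /H_adj_nat /=; arith.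
Ltac vert_simpl := rewrite ?inE ?val_vert ?H_adjE /H_adj_nat /=; try arith.

Definition out F k := vert k \notin F.
Definition out_W_but F i := forall k, 1 <= k <= r -> k != i -> out F k.
Definition out_path F := forall j, 1 <= j <= s -> out F (r + j).

Lemma fort_forced_at F a b : fort G F -> a < r + s + 1 -> b < r + s + 1 ->
  out F a -> H_adj_nat r s a b ->
  (forall c, c < r + s + 1 -> H_adj_nat r s a c -> c != b -> out F c) -> out F b.
Proof.
move=> fF lt_a lt_b aF ab others.
apply: (fort_forced_out fF aF); first by rewrite H_adjE !val_vert.
move=> x; rewrite H_adjE val_vert // => ax xb.
by rewrite /out -(vert_val x); apply: others; rewrite -?eq_vert.
Qed.

Lemma out_w_via_u F i : fort G F -> 1 <= i <= r ->
  out F 0 -> out_W_but F i -> out F i.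
Proof.
move=> fF ir u_out W_out; apply: (@fort_forced_at F 0 i fF) => //; try adj_arith.
by move=> c _ uc ci; apply: W_out => //; move: uc; adj_arith.
Qed.

Lemma out_u_via_w F k : fort G F -> 1 <= k <= r ->
  out F k -> out F (r + s) -> out F 0.
Proof.
move=> fF kr w_out u'_out; apply: (@fort_forced_at F k 0 fF) => //; try adj_arith.
by move=> c _ wc c0; have -> : c = r + s by move: wc; adj_arith.
Qed.

Lemma out_u'_via_w F k : fort G F -> 1 <= k <= r ->
  out F k -> out F 0 -> out F (r + s).
Proof.
move=> fF kr w_out u_out; apply: (@fort_forced_at F k (r + s) fF) => //; try adj_arith.
by move=> c _ wc cu'; have -> : c = 0 by move: wc; adj_arith.
Qed.

Lemma out_ys1_via_u' F : fort G F ->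
  out F (r + s) -> out_W_but F 0 -> out F (r + s - 1).
Proof.
move=> fF u'_out W_out; apply: (@fort_forced_at F (r + s) (r + s - 1) fF) => //;
  try adj_arith.
by move=> c _ u'c cy; apply: W_out; move: u'c cy; adj_arith.
Qed.

Lemma out_w_via_u' F i : fort G F -> 1 <= i <= r ->
  out F (r + s) -> out F (r + s - 1) -> out_W_but F i -> out F i.
Proof.
move=> fF ir u'_out y_out W_out; apply: (@fort_forced_at F (r + s) i fF) => //;
  try adj_arith.
move=> c _ u'c ci; have [-> // | cy] := eqVneq c (r + s - 1).
by apply: W_out => //; move: u'c cy; adj_arith.
Qed.

Lemma out_path_up F k : fort G F -> 1 <= k -> k.+2 <= s ->
  out F (r + k) -> out F (r + k.+1) -> out F (r + k.+2).
Proof.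
move=> fF k1 ks y_out y1_out; apply: (@fort_forced_at F (r + k.+1) (r + k.+2) fF) => //;
  try adj_arith.
by move=> c _ yc cy; have -> : c = r + k by move: yc cy; adj_arith.
Qed.

Lemma out_path_down F k : fort G F -> 1 < k < s ->
  out F (r + k) -> out F (r + k.+1) -> out F (r + k.-1).
Proof.
move=> fF ks y_out y1_out; apply: (@fort_forced_at F (r + k) (r + k.-1) fF) => //;
  try adj_arith.
by move=> c _ yc cy; have -> : c = r + k.+1 by move: yc cy; adj_arith.
Qed.

Lemma out_path_of_pair F j : fort G F -> 1 <= j < s ->
  out F (r + j) -> out F (r + j.+1) -> out_path F.
Proof.
move=> fF; apply: (pair_spread (P := fun k => out F (r + k))).
  by move=> k; apply: out_path_up.
by move=> k; apply: out_path_down.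
Qed.

Lemma out_path_of_y1 F : fort G F -> out F (r + 1) -> out_path F.
Proof.
move=> fF y1_out; apply: (out_path_of_pair fF (j := 1)) => //; first arith.
apply: (@fort_forced_at F (r + 1) (r + 2) fF) => //; adj_arith.
Qed.

Lemma fort_not_out_everywhere F : fort G F ->
  out F 0 -> out_W_but F 0 -> out_path F -> False.
Proof.
move=> fF u_out W_out path_out; have /set0Pn[x xF] := fort_neq0 fF.
suff : out F x by rewrite /out vert_val xF.
have := ltn_ord x.
have [-> // | [xW | xY]] : x = 0 :> nat \/ 1 <= x <= r \/ r < x by arith.
  by move=> _; apply: W_out => //; arith.
move=> lt_x; have -> : x = r + (x - r) :> nat by arith.
by apply: path_out; arith.
Qed.

Lemma out_W_but_add F i : 1 <= i <= r -> out_W_but F i -> out F i -> out_W_but F 0.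
Proof.
by move=> ir W_out w_out k kr _; have [-> | ki] := eqVneq k i; last apply: W_out.
Qed.

Lemma no_fort_out_path_W F i : fort G F -> 1 <= i <= r ->
  out_path F -> out_W_but F i -> False.
Proof.
move=> fF ir path_out W_out.
have u'_out : out F (r + s) by apply: path_out; arith.
have y_out : out F (r + s - 1).
  have -> : r + s - 1 = r + (s - 1) by arith.
  by apply: path_out; arith.
have allW_out := out_W_but_add ir W_out (out_w_via_u' fF ir u'_out y_out W_out).
have u_out : out F 0 by apply: (@out_u_via_w F 1) => //; [arith | apply: allW_out; arith].
exact: fort_not_out_everywhere u_out allW_out path_out.
Qed.

Lemma no_fort_out_u_W F i : fort G F -> 1 <= i <= r ->
  out F 0 -> out_W_but F i -> False.
Proof.
move=> fF ir u_out W_out.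
have allW_out := out_W_but_add ir W_out (out_w_via_u fF ir u_out W_out).
have u'_out : out F (r + s).
  by apply: (@out_u'_via_w F 1) => //; [arith | apply: allW_out; arith].
have y_out := out_ys1_via_u' fF u'_out allW_out.
apply: (no_fort_out_path_W fF ir _ W_out); apply: (out_path_of_pair fF (j := s - 1)).
- arith.
- by have <- : r + s - 1 = r + (s - 1) by arith.
- by have -> : r + (s - 1).+1 = r + s by arith.
Qed.

Lemma no_fort_out_u'_W F i : fort G F -> 1 <= i <= r ->
  out F (r + s) -> out_W_but F i -> False.
Proof.
move=> fF ir u'_out W_out; apply: (no_fort_out_u_W fF ir _ W_out).
pose k := if i == 1 then 2 else 1.
have kr : 1 <= k <= r by rewrite /k; case: ifP => /eqP; arith.
have ki : k != i by rewrite /k; case: ifP => /eqP; arith.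
exact: out_u_via_w fF kr (W_out k kr ki) u'_out.
Qed.

Definition W : {set V} := [set x : V | 1 <= x < r.+1].
Definition W_but i : {set V} := W :\ vert i.
Definition uW : {set V} := [set x : V | x < r.+1].

Lemma card_W : #|W| = r.
Proof. by rewrite card_ord_range ?subn1 //; arith. Qed.

Lemma card_uW : #|uW| = r.+1.
Proof.
have := @card_ord_range (r + s + 1) 0 r.+1; rewrite subn0 => <- //; arith.
Qed.

Lemma in_W_but i (x : V) : i < r + s + 1 ->
  (x \in W_but i) = (x != i :> nat) && (1 <= x <= r).
Proof. by move=> lt_i; rewrite !inE eq_vert. Qed.

Lemma card_W_but i : 1 <= i <= r -> #|W_but i| = r - 1.
Proof.
move=> ir; have iW : vert i \in W by vert_simpl.
have := cardsD1 (vert i) W; rewrite card_W iW /W_but /=; move: #|_ :\ _| => c; arith.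
Qed.

Lemma card_vert_W_but a i : 1 <= i <= r -> a < r + s + 1 -> (a == 0) || (r < a) ->
  #|vert a |: W_but i| = r.
Proof.
move=> ir lt_a aW; rewrite cardsU1 card_W_but // in_W_but ?val_vert; arith.
Qed.

Lemma two_nbrs_in F (v : V) a b : a < r + s + 1 -> b < r + s + 1 -> a != b ->
  vert a \in F -> vert b \in F -> H_adj_nat r s v a -> H_adj_nat r s v b ->
  exists a' b', [/\ a' \in F, b' \in F, a' != b', G v a' & G v b'].
Proof.
move=> lt_a lt_b ab aF bF va vb; exists (vert a), (vert b).
by rewrite !H_adjE !val_vert // eq_vert // val_vert.
Qed.

Definition Fodd : {set V} := [set x : V | ((x : nat) == 0) || (r < x) && odd (x - r)].

Lemma fort_superset_Fodd F : Fodd \subset F -> fort G F.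
Proof.
move=> sF; apply: (fort_of_2dominated (F := Fodd)) => //.
  by apply/set0Pn; exists (vert 0); vert_simpl.
move=> v vF; have := ltn_ord v.
have : v \notin Fodd by apply: contra vF; apply: (subsetP sF).
rewrite inE; case: (leqP v r) => vr v_nF lt_v.
  by apply: (@two_nbrs_in Fodd v 0 (r + s)); vert_simpl.
by apply: (@two_nbrs_in Fodd v v.-1 v.+1); vert_simpl.
Qed.

Lemma fort_Fodd : fort G Fodd.
Proof. exact: fort_superset_Fodd. Qed.

Lemma fort_W2 a b : a \in W -> b \in W -> a != b -> fort G [set a; b].
Proof.
rewrite !inE => aW bW ab; apply: fortI => [|v].
  by apply/set0Pn; exists a; rewrite set21.
rewrite !inE negb_or => /andP[va vb]; have := ltn_ord v.
case: (boolP (((v : nat) == 0) || ((v : nat) == r + s))) => vu lt_v.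
  by right; exists a, b; rewrite !inE !eqxx orbT ab !H_adjE; split => //; vert_simpl.
left=> x; rewrite H_adjE !inE => vx; apply/negP => /orP[] /eqP xab.
  by subst x; move: vx; vert_simpl.
by subst x; move: vx; vert_simpl.
Qed.

Lemma fort_uW : fort G uW.
Proof.
apply: fortI => [|v]; first by apply/set0Pn; exists (vert 0); vert_simpl.
rewrite inE -leqNgt => rv; have := ltn_ord v.
have [vu' | vu'] := eqVneq (v : nat) (r + s) => lt_v.
  by right; apply: (@two_nbrs_in uW v 1 2); vert_simpl.
by left=> x; rewrite H_adjE inE => vx; have := ltn_ord x; move: vx; vert_simpl.
Qed.

Definition Finner : {set V} := [set x : V | 0 < x < r + s].

Lemma fort_Finner : fort G Finner.
Proof.
apply: (fort_of_2dominated (F := Finner)) => //.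
  by apply/set0Pn; exists (vert 1); vert_simpl.
move=> v; rewrite inE => vF; have := ltn_ord v => lt_v.
by apply: (@two_nbrs_in Finner v 1 2); vert_simpl.
Qed.

Definition Feven : {set V} := [set x : V | [|| (x : nat) == 0, (x : nat) == r + 1,
  (x : nat) == r + s | (r + 1 < x < r + s) && ~~ odd (x - r)]].

Lemma fort_Feven : fort G Feven.
Proof.
apply: (fort_of_2dominated (F := Feven)) => //.
  by apply/set0Pn; exists (vert 0); vert_simpl.
move=> v; rewrite inE => vF; have := ltn_ord v => lt_v; case: (leqP v r) => vr.
  by apply: (@two_nbrs_in Feven v 0 (r + s)); vert_simpl.
by apply: (@two_nbrs_in Feven v v.-1 v.+1); vert_simpl.
Qed.

Lemma fort_setC B : vert 0 \notin B -> vert (r + 1) \notin B -> vert (r + s) \notin B ->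
  (forall j, 1 <= j < s -> vert (r + j) \in B -> vert (r + j.+1) \notin B) ->
  fort G (~: B).
Proof.
move=> uB y1B u'B sparse; apply: (fort_of_2dominated (F := ~: B)) => //.
  by apply/set0Pn; exists (vert 0); rewrite inE.
move=> v; rewrite inE negbK => vB; have lt_v := ltn_ord v.
have v_neq k : k < r + s + 1 -> vert k \notin B -> (v : nat) != k.
  by move=> lt_k; apply: contraNneq => <-; rewrite vert_val.
have v0 := v_neq 0 vert_default uB.
have v1 : (v : nat) != r + 1 by apply: v_neq y1B; arith.
have vu' : (v : nat) != r + s by apply: v_neq u'B; arith.
have [vr | rv] := leqP v r.
  by apply: (@two_nbrs_in (~: B) v 0 (r + s)); rewrite ?inE //; vert_simpl.
have sparse_at k : r < k < r + s -> vert k \in B -> vert k.+1 \notin B.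
  move=> kr; have -> : k.+1 = r + (k - r).+1 by arith.
  have {1}-> : k = r + (k - r) by arith.
  by apply: sparse; arith.
apply: (@two_nbrs_in (~: B) v v.-1 v.+1); rewrite ?inE; try vert_simpl.
  apply/negP => pB; have := sparse_at v.-1 _ pB; rewrite prednK ?vert_val ?vB //; arith.
by apply: sparse_at; rewrite ?vert_val //; arith.
Qed.

Lemma zero_forcing_W_but i X : 1 <= i <= r ->
  (forall F, fort G F -> out_W_but F i -> (forall x, x \in X -> x \notin F) -> False) ->
  zero_forcing_set G (X :|: W_but i).
Proof.
move=> ir no_fort; apply/zero_forcing_setP => F fF; apply/negP => /eqP FB.
have outB x : x \in X :|: W_but i -> x \notin F.
  by move=> xB; apply/negP => xF; have := in_set0 x; rewrite -FB inE xF xB.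
apply: (no_fort F fF) => [k kr ki | x xX]; apply: outB; rewrite inE ?xX //.
by rewrite in_W_but ?val_vert; arith.
Qed.

Lemma zf_u_W i : 1 <= i <= r -> zero_forcing_set G (vert 0 |: W_but i).
Proof.
move=> ir; apply: zero_forcing_W_but => // F fF W_out X_out.
exact: (no_fort_out_u_W fF ir (X_out _ (set11 _)) W_out).
Qed.

Lemma zf_u'_W i : 1 <= i <= r -> zero_forcing_set G (vert (r + s) |: W_but i).
Proof.
move=> ir; apply: zero_forcing_W_but => // F fF W_out X_out.
exact: (no_fort_out_u'_W fF ir (X_out _ (set11 _)) W_out).
Qed.

Lemma zf_y1_W i : 1 <= i <= r -> zero_forcing_set G (vert (r + 1) |: W_but i).
Proof.
move=> ir; apply: zero_forcing_W_but => // F fF W_out X_out.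
exact: (no_fort_out_path_W fF ir (out_path_of_y1 fF (X_out _ (set11 _))) W_out).
Qed.

Lemma zf_pair_W i j : 1 <= i <= r -> 1 <= j < s ->
  zero_forcing_set G ([set vert (r + j); vert (r + j.+1)] :|: W_but i).
Proof.
move=> ir js; apply: zero_forcing_W_but => // F fF W_out X_out.
have path_out := out_path_of_pair fF js (X_out _ (set21 _ _)) (X_out _ (set22 _ _)).
exact: no_fort_out_path_W fF ir path_out W_out.
Qed.

Lemma W_but_sub_zero_forcing B : zero_forcing_set G B ->
  exists2 i, 1 <= i <= r & W_but i \subset B.
Proof.
move=> zB; have [WB | /subsetPn[w wW wB]] := boolP (W \subset B).
  by exists 1; [arith | exact: subset_trans (subD1set _ _) WB].
have lt_w := ltn_ord w; exists (nat_of_ord w); first by move: wW; rewrite inE; arith.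
apply/subsetP=> x; rewrite in_W_but // => /andP[xw xr]; apply/negPn/negP => xB.
have xW : x \in W by rewrite inE; arith.
have xw' : x != w by apply: contraNneq xw => ->.
have [y] := zero_forcing_meets_fort zB (fort_W2 xW wW xw').
by case/set2P => ->; [rewrite (negbTE xB) | rewrite (negbTE wB)].
Qed.

Lemma card_zero_forcing_ge B : zero_forcing_set G B -> r <= #|B|.
Proof.
move=> zB; have [i ir WB] := W_but_sub_zero_forcing zB.
have [z zF zB'] := zero_forcing_meets_fort zB fort_Fodd.
have zW : (z == 0 :> nat) || (r < z) by move: zF; rewrite inE; arith.
have sub : vert z |: W_but i \subset B by rewrite subUset sub1set vert_val zB' WB.
by move/subset_leq_card: sub; rewrite card_vert_W_but.
Qed.

Lemma Zf_H : Zf G = r.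
Proof.
apply: bigmin_eq; first by rewrite card_ord; arith.
  by exists (vert 0 |: W_but r); [apply: zf_u_W | apply: card_vert_W_but]; arith.
exact: card_zero_forcing_ge.
Qed.

Lemma private_out S x F k : private_fort_of G S x F ->
  k < r + s + 1 -> vert k \in S -> vert k != x -> out F k.
Proof. by case=> _ _ notF lt_k; apply: notF. Qed.

Lemma ZIr_not_uW S : ZIr_set G S -> ~~ (uW \subset S).
Proof.
move/ZIr_setP=> priv; apply/negP => uWS.
have uS : vert 0 \in S by apply: (subsetP uWS); vert_simpl.
have w1S : vert 1 \in S by apply: (subsetP uWS); vert_simpl.
have [F pF] := priv _ w1S; have [fF _ _] := pF.
apply: (@no_fort_out_u_W F 1 fF); first arith.
  by apply: (private_out pF) => //; [arith | apply: vert_neq; arith].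
move=> k kr k1; apply: (private_out pF); first arith.
  by apply: (subsetP uWS); vert_simpl.
by apply: vert_neq; arith.
Qed.

Lemma card_ZIr_uW S : ZIr_set G S -> #|S :&: uW| <= r.
Proof.
move=> zS; rewrite -ltnS -card_uW; apply: proper_card.
rewrite properEneq subsetIr andbT.
by apply: contraNneq (ZIr_not_uW zS) => <-; apply: subsetIl.
Qed.

Lemma ZIr_path_sub S X : ZIr_set G S -> X \subset S ->
  (forall F, fort G F -> (forall y, y \in X -> y \notin F) -> out_path F) ->
  S :\: uW \subset X.
Proof.
move/ZIr_setP=> priv XS path_out.
apply/subsetP => x; rewrite !inE -leqNgt => /andP[rx xS].
apply/negPn/negP => xX; have [F [fF xF notF]] := priv x xS.
have : out F (r + (x - r)).
  apply: path_out => [//|y yX|]; last by have := ltn_ord x; arith.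
  by apply: notF; [apply: (subsetP XS) | apply: contraNneq xX => <-].
have -> : r + (x - r) = x by arith.
by rewrite /out vert_val xF.
Qed.

Section ConsecutivePair.
Variables (S : {set V}) (j : nat).
Hypotheses (zS : ZIr_set G S) (js : 1 <= j < s)
  (yjS : vert (r + j) \in S) (yj1S : vert (r + j.+1) \in S).

Lemma private_out_path_pair x F : private_fort_of G S x F ->
  x \notin [set vert (r + j); vert (r + j.+1)] -> out_path F.
Proof.
case=> fF _ notF; rewrite !inE negb_or => /andP[x1 x2].
by apply: (out_path_of_pair fF js); apply: notF; rewrite // eq_sym.
Qed.

Lemma card_ZIr_pair_path : #|S :\: uW| <= 2.
Proof.
have sub : S :\: uW \subset [set vert (r + j); vert (r + j.+1)].
  apply: ZIr_path_sub zS _ _; first by rewrite subUset !sub1set yjS yj1S.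
  move=> F fF notF; apply: (out_path_of_pair fF js); apply: notF;
    by rewrite !inE eqxx ?orbT.
by apply: leq_trans (subset_leq_card sub) _; rewrite cards2; case: (_ != _).
Qed.

Lemma ZIr_pair_u_W w : vert 0 \in S -> w \in W -> w \notin S.
Proof.
move=> uS; rewrite inE => wr; apply/negP => wS; move/ZIr_setP: zS => priv.
have [F pF] := priv _ uS; have [fF uF _] := pF.
have path_out : out_path F.
  by apply: (private_out_path_pair pF); rewrite !inE !eq_vert ?val_vert; arith.
have w_out : out F w.
  apply: (private_out pF); rewrite ?vert_val //.
  by rewrite eq_vert ?vert_val; arith.
have : out F 0 by apply: (out_u_via_w fF _ w_out); [arith | apply: path_out; arith].
by rewrite /out uF.
Qed.

Lemma ZIr_pair_not_W : ~~ (W \subset S).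
Proof.
apply/negP => WS; move/ZIr_setP: zS => priv.
have w1S : vert 1 \in S by apply: (subsetP WS); vert_simpl.
have [F pF] := priv _ w1S; have [fF _ _] := pF.
apply: (@no_fort_out_path_W F 1 fF); first arith.
  by apply: (private_out_path_pair pF); rewrite !inE !eq_vert ?val_vert; arith.
move=> k kr k1; apply: (private_out pF); first arith.
  by apply: (subsetP WS); vert_simpl.
by apply: vert_neq; arith.
Qed.

Lemma card_ZIr_pair_uW : #|S :&: uW| <= r - 1.
Proof.
have /subsetPn[w wW wS] := ZIr_pair_not_W.
have [uS | uS] := boolP (vert 0 \in S).
  have sub : S :&: uW \subset [set vert 0].
    apply/subsetP => x; rewrite !inE => /andP[xS xr].
    rewrite eq_vert //; last exact: vert_default.
    by apply: contraTT xS => x0; apply: ZIr_pair_u_W => //; rewrite inE; arith.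
  by apply: leq_trans (subset_leq_card sub) _; rewrite cards1; arith.
have sub : S :&: uW \subset W_but w.
  apply/subsetP => x; rewrite !inE vert_val => /andP[xS xr].
  have xw : x != w by apply: contraNneq wS => <-.
  have : x != vert 0 by apply: contraNneq uS => <-.
  by rewrite xw eq_vert /=; [arith | exact: vert_default].
by move/subset_leq_card: sub; rewrite card_W_but //; move: wW; rewrite inE; arith.
Qed.

End ConsecutivePair.

Lemma card_ZIr_y1_path S : ZIr_set G S -> vert (r + 1) \in S -> #|S :\: uW| <= 1.
Proof.
move=> zS y1S; have sub : S :\: uW \subset [set vert (r + 1)].
  apply: ZIr_path_sub zS _ _; first by rewrite sub1set.
  by move=> F fF notF; apply: out_path_of_y1 fF (notF _ (set11 _)).
by move/subset_leq_card: sub; rewrite cards1.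
Qed.

Lemma card_sparse_path S : vert (r + 1) \notin S ->
  (forall j, 1 <= j < s -> vert (r + j) \in S -> vert (r + j.+1) \notin S) ->
  #|S :\: uW| <= (s - 1) %/ 2.
Proof.
move=> y1S sparse; have -> : (s - 1) %/ 2 = (s - 1).+1 %/ 2 by arith.
have inS x : x \in S :\: uW -> r + 2 <= x /\ x \in S.
  rewrite !inE -leqNgt => /andP[rx xS]; split => //.
  have : (x : nat) != r + 1 by apply: contraNneq y1S => <-; rewrite vert_val.
  by arith.
apply: (card_sparse (f := fun x : V => x - r - 2)).
- by move=> x y /inS[rx _] /inS[ry _] /= xy; apply: ord_inj; arith.
- by move=> x /inS[rx _]; have := ltn_ord x; arith.
move=> x y /inS[rx xS] /inS[ry yS] /=; apply/negP => /eqP xy.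
have lt_y := ltn_ord y; have js : 0 < x - r < s by arith.
have := sparse _ js; have -> : r + (x - r) = x by arith.
have -> : r + (x - r).+1 = y by arith.
by rewrite !vert_val xS yS => /(_ isT).
Qed.

Lemma card_ZIr_le S : ZIr_set G S -> #|S| <= r + (s - 1) %/ 2.
Proof.
move=> zS; rewrite -(cardsID uW S); have := card_ZIr_uW zS.
case: (pickP (fun j : 'I_s => [&& 0 < j, vert (r + j) \in S & vert (r + j.+1) \in S])).
  move=> j /and3P[j0 yjS yj1S]; have js : 0 < j < s by rewrite j0 ltn_ord.
  have := card_ZIr_pair_uW zS js yjS yj1S; have := card_ZIr_pair_path zS js yjS yj1S.
  by move: #|S :&: uW| #|S :\: uW| => a b; arith.
move=> no_pair; have [y1S | y1S] := boolP (vert (r + 1) \in S).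
  by have := card_ZIr_y1_path zS y1S; move: #|S :&: uW| #|S :\: uW| => a b; arith.
have sparse j : 0 < j < s -> vert (r + j) \in S -> vert (r + j.+1) \notin S.
  move=> js yjS; apply/negP => yj1S.
  by have := no_pair (Ordinal (proj2 (andP js))); rewrite /= yjS yj1S (proj1 (andP js)).
by have := card_sparse_path y1S sparse; move: #|S :&: uW| #|S :\: uW| => a b; arith.
Qed.

Definition Yeven : {set V} := [set vert (r + (2 * t).+2) | t : 'I_((s - 1) %/ 2)].
Definition W_Yeven : {set V} := W :|: Yeven.

Lemma Yeven_val x : x \in Yeven -> r + 2 <= x < r + s /\ ~~ odd (x - r).
Proof. by case/imsetP => t _ ->; have lt_t := ltn_ord t; rewrite val_vert; arith. Qed.

Lemma card_Yeven : #|Yeven| = (s - 1) %/ 2.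
Proof.
rewrite card_imset ?card_ord // => a b; have lt_a := ltn_ord a; have lt_b := ltn_ord b.
by move/(congr1 val); rewrite /= !val_vert; [move=> ab; apply: ord_inj | ..]; arith.
Qed.

Lemma card_W_Yeven : #|W_Yeven| = r + (s - 1) %/ 2.
Proof.
rewrite cardsU card_W card_Yeven; suff -> : W :&: Yeven = set0 by rewrite cards0 subn0.
by apply/setP => x; rewrite !inE; apply/negbTE/andP => -[xW /Yeven_val[]]; arith.
Qed.

Lemma ZIr_W_Yeven : ZIr_set G W_Yeven.
Proof.
apply/ZIr_setP => x _; exists (x |: Fodd); split.
- by apply: fort_superset_Fodd; apply: subsetUr.
- exact: setU11.
move=> y yS yx; rewrite in_setU1 negb_or yx inE.
by case/setUP: yS => [| /Yeven_val]; rewrite ?inE; arith.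
Qed.

Lemma ZIR_H : ZIR G = r + (s - 1) %/ 2.
Proof.
apply: bigmax_eq => [|S /maxsetP[zS _]]; last exact: card_ZIr_le.
exists W_Yeven; last exact: card_W_Yeven.
apply/maxsetP; split => [|B zB sB]; first exact: ZIr_W_Yeven.
by apply/eqP; rewrite eq_sym eqEcard sB card_W_Yeven card_ZIr_le.
Qed.

Definition u_y1 : {set V} := [set vert 0; vert (r + 1)].

Lemma maxset_ZIr_u_y1 : maxset (ZIr_set G) u_y1.
Proof.
apply/maxsetP; split=> [|B zB sB].
  by apply: (ZIr_set2 fort_uW _ _ fort_Finner); vert_simpl.
have uB : vert 0 \in B by apply: (subsetP sB); rewrite set21.
have y1B : vert (r + 1) \in B by apply: (subsetP sB); rewrite set22.
apply/eqP; rewrite eqEsubset sB andbT; apply/subsetP => x xB.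
apply/negPn/negP; rewrite !inE negb_or !eq_vert; try arith.
move=> /andP[x0 x1]; have lt_x := ltn_ord x; move/ZIr_setP: zB => priv.
have [xr | rx] := leqP x r.
  have [F pF] := priv _ uB; have [fF uF _] := pF.
  have y1_out : out F (r + 1).
    by apply: (private_out pF) => //; [arith | apply: vert_neq; arith].
  have u'_out : out F (r + s) by apply: (out_path_of_y1 fF y1_out); arith.
  have x_out : out F x.
    by apply: (private_out pF); rewrite ?vert_val // eq_vert; arith.
  have : out F 0 by apply: (out_u_via_w fF _ x_out u'_out); arith.
  by rewrite /out uF.
have [F pF] := priv _ xB; have [fF xF _] := pF.
have y1_out : out F (r + 1).
  by apply: (private_out pF) => //; [arith | rewrite eq_sym eq_vert; arith].
have : out F (r + (x - r)) by apply: (out_path_of_y1 fF y1_out); arith.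
have -> : r + (x - r) = x by arith.
by rewrite /out vert_val xF.
Qed.

Lemma ZIr_set2_exists x : exists2 z, z != x & ZIr_set G [set x; z].
Proof.
have lt_x := ltn_ord x.
have [xW | xW] := boolP (x \in W).
  pose w := if (x : nat) == 1 then 2 else 1.
  have w12 : 1 <= w <= 2 by rewrite /w; case: ifP.
  have wW : vert w \in W by rewrite inE val_vert; arith.
  have wx : x != vert w.
    by rewrite eq_vert /w; move: xW; rewrite inE; case: ifP => /eqP; arith.
  have ux : vert 0 != x by rewrite eq_sym eq_vert; move: xW; rewrite inE; arith.
  have uw : vert 0 != vert w by apply: vert_neq; arith.
  exists (vert 0) => //; apply: (ZIr_set2 (fort_W2 xW wW wx) _ _ fort_Fodd).
  - exact: set21.
  - by rewrite !inE negb_or ux uw.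
  - by vert_simpl.
  - by move: xW; rewrite !inE; arith.
have w1 : vert 1 \in W by vert_simpl.
have w2 : vert 2 \in W by vert_simpl.
have w12 : vert 1 != vert 2 by apply: vert_neq; arith.
have w1x : vert 1 != x by rewrite eq_sym eq_vert; move: xW; rewrite inE; arith.
exists (vert 1) => //.
apply: (ZIr_set2 (fort_superset_Fodd (subsetUr [set x] Fodd)) _ _ (fort_W2 w1 w2 w12)).
- exact: setU11.
- by rewrite !inE negb_or w1x /=; vert_simpl.
- exact: set21.
- by rewrite !inE !eq_vert; move: xW; rewrite inE; arith.
Qed.

Lemma zir_H : zir G = 2.
Proof.
apply: bigmin_eq; first by rewrite card_ord; arith.
  exists u_y1; first exact: maxset_ZIr_u_y1.
  by rewrite cards2 vert_neq //; arith.
by move=> S; apply: (maxset_ZIr_card_gt1 (S := S) (vert 0) ZIr_set2_exists).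
Qed.

Lemma zero_forcing_inner_pair B : zero_forcing_set G B ->
  vert 0 \notin B -> vert (r + 1) \notin B -> vert (r + s) \notin B ->
  exists j, [/\ 1 < j < s.-1, vert (r + j) \in B & vert (r + j.+1) \in B].
Proof.
move=> zB uB y1B u'B.
case: (pickP (fun j : 'I_s =>
  [&& 1 < j < s.-1, vert (r + j) \in B & vert (r + j.+1) \in B])).
  by move=> j /and3P[js yjB yj1B]; exists j.
move=> no_pair; have sparse j : 0 < j < s -> vert (r + j) \in B -> vert (r + j.+1) \notin B.
  move=> js yjB; have [j1 | [js1 | jin]] : j = 1 \/ j = s.-1 \/ 1 < j < s.-1 by arith.
  - by subst j; rewrite yjB in y1B.
  - by have -> : r + j.+1 = r + s by arith.
  apply/negP => yj1B; have := no_pair (Ordinal (proj2 (andP js))).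
  by rewrite /= jin yjB yj1B.
have [x] := zero_forcing_meets_fort zB (fort_setC uB y1B u'B sparse).
by rewrite inE => /negP.
Qed.

Lemma card_minset_zero_forcing B : minset (zero_forcing_set G) B ->
  #|B| <= r + 1 /\ (s = 3 -> #|B| <= r).
Proof.
case/minsetP => zB minB; have [i ir WB] := W_but_sub_zero_forcing zB.
have card_vert a : a < r + s + 1 -> (a == 0) || (r < a) -> vert a \in B ->
    zero_forcing_set G (vert a |: W_but i) -> #|B| = r.
  move=> lt_a aW aB zX; rewrite -(minB _ zX) ?card_vert_W_but //.
  by rewrite subUset sub1set aB WB.
have [uB | uB] := boolP (vert 0 \in B).
  by rewrite (card_vert 0) ?zf_u_W //; arith.
have [y1B | y1B] := boolP (vert (r + 1) \in B).
  by rewrite (card_vert (r + 1)) ?zf_y1_W //; arith.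
have [u'B | u'B] := boolP (vert (r + s) \in B).
  by rewrite (card_vert (r + s)) ?zf_u'_W //; arith.
have [j [js yjB yj1B]] := zero_forcing_inner_pair zB uB y1B u'B.
have XB : [set vert (r + j); vert (r + j.+1)] :|: W_but i \subset B.
  by rewrite !subUset !sub1set yjB yj1B WB.
rewrite -(minB _ (zf_pair_W ir _) XB); last arith.
split; last arith.
apply: leq_trans (leq_card_setU _ _).1 _.
by rewrite card_W_but // cards2; case: (_ != _); arith.
Qed.

Lemma private_fort_W_but X b : (forall x, x \in X -> x \notin W) -> b \in W_but r ->
  private_fort_of G (X :|: W_but r) b [set b; vert r].
Proof.
move=> XW bW; have rW : vert r \in W by vert_simpl.
have := bW; rewrite in_W_but; last arith.
move=> /andP[br b1]; have b_in_W : b \in W by rewrite inE; arith.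
have brv : b != vert r by rewrite eq_vert //; arith.
split; [exact: fort_W2 | exact: set21 |].
move=> y yS yb; rewrite !inE negb_or yb /=; case/setUP: yS => [/XW | ].
  by apply: contraNneq => ->.
by rewrite in_W_but ?eq_vert; arith.
Qed.

Lemma minset_zf_y2y3 : 5 <= s ->
  minset (zero_forcing_set G) ([set vert (r + 2); vert (r + 3)] :|: W_but r).
Proof.
move=> s5; apply: minset_zero_forcing; first by apply: (@zf_pair_W r 2); arith.
have YW x : x \in [set vert (r + 2); vert (r + 3)] -> x \notin W.
  by case/set2P => ->; vert_simpl.
move=> b /setUP[/set2P[]-> | bW]; last by exists [set b; vert r]; apply: private_fort_W_but.
  exists Feven; split; [exact: fort_Feven | by vert_simpl |].
  move=> y /setUP[/set2P[]-> | yW] yb; first by rewrite eqxx in yb.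
    by vert_simpl.
  by move: yW; rewrite in_W_but ?inE; arith.
exists Fodd; split; [exact: fort_Fodd | by vert_simpl |].
move=> y /setUP[/set2P[]-> | yW] yb; last by move: yW; rewrite in_W_but ?inE; arith.
  by vert_simpl.
by rewrite eqxx in yb.
Qed.

Lemma card_y2y3_W_but : #|[set vert (r + 2); vert (r + 3)] :|: W_but r| = r + 1.
Proof.
rewrite -setUA cardsU1 cardsU1 card_W_but; last arith.
rewrite !inE !eq_vert ?val_vert /=; arith.
Qed.

Lemma minset_zf_u_W : minset (zero_forcing_set G) (vert 0 |: W_but r).
Proof.
apply: minset_zero_forcing; first by apply: zf_u_W; arith.
have uNW x : x \in [set vert 0] -> x \notin W by move/set1P => ->; vert_simpl.
move=> b /setU1P[-> | bW]; last by exists [set b; vert r]; apply: private_fort_W_but.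
exists Fodd; split; [exact: fort_Fodd | by vert_simpl |].
move=> y /setU1P[-> | yW] yb; first by rewrite eqxx in yb.
by move: yW; rewrite in_W_but ?inE; arith.
Qed.

Lemma Zbar_H_ge5 : 5 <= s -> Zbar G = r + 1.
Proof.
move=> s5; apply: bigmax_eq => [|B /card_minset_zero_forcing[] //].
exists ([set vert (r + 2); vert (r + 3)] :|: W_but r).
  exact: minset_zf_y2y3.
exact: card_y2y3_W_but.
Qed.

Lemma Zbar_H3 : s = 3 -> Zbar G = r.
Proof.
move=> s3; apply: bigmax_eq => [|B /card_minset_zero_forcing[_]]; last exact.
by exists (vert 0 |: W_but r); [exact: minset_zf_u_W | apply: card_vert_W_but; arith].
Qed.

End HGraph.

Theorem proposition3p6 :
  (forall r s : nat, 2 <= r -> odd s -> 3 <= s ->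
     [/\ zir (H_adj r s) = 2,
         Zf (H_adj r s) = r &
         ZIR (H_adj r s) = r + (s - 1) %/ 2]) /\
  (forall r s : nat, 2 <= r -> odd s -> 5 <= s ->
     Zbar (H_adj r s) = r + 1) /\
  (forall r : nat, 2 <= r -> Zbar (H_adj r 3) = r).
Proof.
split; [|split].
- by move=> r s r2 s_odd s3; split; [apply: zir_H | apply: Zf_H | apply: ZIR_H].
- by move=> r s r2 s_odd s5; apply: Zbar_H_ge5 => //; apply: leq_trans s5.
- by move=> r r2; apply: Zbar_H3.
Qed.
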